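(* The functors $I$ and $J$ on the category $\mathbf{Comp}$ of compact Hausdorff spaces and continuous maps are isomorphic; that is, there exist homeomorphisms $k_X\colon I(X)\to J(X)$, one for each compact Hausdorff space $X$, such that $J(f)\circ k_X=k_Y\circ I(f)$ for every continuous map $f\colon X\to Y$.
   Context: A max-min measure on a compact Hausdorff space $X$ is a functional $\mu\colon C(X)\to\mathbb R$ (not assumed continuous) with $\mu(c_X)=c$ for constants, $\mu(\varphi\vee\psi)=\mu(\varphi)\vee\mu(\psi)$, $\mu(c\wedge\varphi)=c\wedge\mu(\varphi)$ for $c\in\mathbb R$. A max-plus (idempotent) measure is a functional $\mu\colon C(X)\to\mathbb R$ with $\mu(c_X)=c$, $\mu(\varphi\vee\psi)=\mu(\varphi)\vee\mu(\psi)$, $\mu(c_X+\varphi)=c+\mu(\varphi)$. $J(X)$, resp. $I(X)$, is the set of max-min, resp. max-plus, measures with the topology of pointwise convergence on $C(X)$. For a continuous $f\colon X\to Y$, $J(f)(\mu)(\varphi)=\mu(\varphi\circ f)$ and $I(f)(\mu)(\varphi)=\mu(\varphi\circ f)$. *)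

From Stdlib Require Import Reals List.
Import ListNotations.
Open Scope R_scope.

Definition is_topology {A : Type} (O : (A -> Prop) -> Prop) : Prop :=
  O (fun _ => True) /\
  (forall U V, O U -> O V -> O (fun a => U a /\ V a)) /\
  (forall F : (A -> Prop) -> Prop, (forall U, F U -> O U) ->
     O (fun a => exists U, F U /\ U a)).

Definition compact {A : Type} (O : (A -> Prop) -> Prop) : Prop :=
  forall F : (A -> Prop) -> Prop,
    (forall U, F U -> O U) ->
    (forall a, exists U, F U /\ U a) ->
    exists l : list (A -> Prop), Forall F l /\ (forall a, exists U, In U l /\ U a).

Definition hausdorff {A : Type} (O : (A -> Prop) -> Prop) : Prop :=
  forall x y : A, x <> y ->
    exists U V, O U /\ O V /\ U x /\ V y /\ (forall z, ~ (U z /\ V z)).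

Definition continuous {A B : Type} (OA : (A -> Prop) -> Prop)
  (OB : (B -> Prop) -> Prop) (f : A -> B) : Prop :=
  forall V, OB V -> OA (fun a => V (f a)).

Definition is_homeomorphism {A B : Type} (OA : (A -> Prop) -> Prop)
  (OB : (B -> Prop) -> Prop) (f : A -> B) : Prop :=
  exists g : B -> A,
    (forall a, g (f a) = a) /\ (forall b, f (g b) = b) /\
    continuous OA OB f /\ continuous OB OA g.

Definition R_open (U : R -> Prop) : Prop :=
  forall x, U x -> exists eps, 0 < eps /\ forall y, Rabs (y - x) < eps -> U y.

Record CompHaus : Type := {
  carrier :> Type;
  opens : (carrier -> Prop) -> Prop;
  opens_topology : is_topology opens;
  opens_compact : compact opens;
  opens_hausdorff : hausdorff opens }.

Definition cmap (X Y : CompHaus) : Type :=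
  {f : X -> Y | continuous (opens X) (opens Y) f}.

Definition Cfun (X : CompHaus) : Type :=
  {phi : X -> R | continuous (opens X) R_open phi}.

Lemma continuous_comp {A B C : Type} (OA : (A -> Prop) -> Prop)
  (OB : (B -> Prop) -> Prop) (OC : (C -> Prop) -> Prop) (f : A -> B) (g : B -> C) :
  continuous OA OB f -> continuous OB OC g -> continuous OA OC (fun a => g (f a)).
Proof. intros hf hg V hV. exact (hf _ (hg V hV)). Qed.

Definition precomp {X Y : CompHaus} (f : cmap X Y) (psi : Cfun Y) : Cfun X :=
  exist _ (fun x => proj1_sig psi (proj1_sig f x))
    (continuous_comp _ _ _ _ _ (proj2_sig f) (proj2_sig psi)).

(* The operations c_X, phi \/ psi, c + phi, c /\ phi on C(X) are expressed
   pointwise: "chi is (pointwise) the function ..." *)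

Definition is_maxplus (X : CompHaus) (mu : Cfun X -> R) : Prop :=
  (forall (c : R) (phi : Cfun X), (forall x, proj1_sig phi x = c) -> mu phi = c) /\
  (forall phi psi chi : Cfun X,
     (forall x, proj1_sig chi x = Rmax (proj1_sig phi x) (proj1_sig psi x)) ->
     mu chi = Rmax (mu phi) (mu psi)) /\
  (forall (c : R) (phi chi : Cfun X),
     (forall x, proj1_sig chi x = c + proj1_sig phi x) -> mu chi = c + mu phi).

Definition is_maxmin (X : CompHaus) (mu : Cfun X -> R) : Prop :=
  (forall (c : R) (phi : Cfun X), (forall x, proj1_sig phi x = c) -> mu phi = c) /\
  (forall phi psi chi : Cfun X,
     (forall x, proj1_sig chi x = Rmax (proj1_sig phi x) (proj1_sig psi x)) ->
     mu chi = Rmax (mu phi) (mu psi)) /\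
  (forall (c : R) (phi chi : Cfun X),
     (forall x, proj1_sig chi x = Rmin c (proj1_sig phi x)) -> mu chi = Rmin c (mu phi)).

Definition IX (X : CompHaus) : Type := {mu : Cfun X -> R | is_maxplus X mu}.
Definition JX (X : CompHaus) : Type := {mu : Cfun X -> R | is_maxmin X mu}.

(* Topology of pointwise convergence on a set of functionals {mu | P mu}:
   W is open iff each mu in W has a basic neighbourhood
   {nu | nu(phi_i) in U_i, i=1..n} (U_i open in R) contained in W. *)
Definition pointwise_open {A : Type} (P : (A -> R) -> Prop)
  (W : {mu : A -> R | P mu} -> Prop) : Prop :=
  forall mu, W mu ->
    exists l : list (A * (R -> Prop)),
      Forall (fun p => R_open (snd p)) l /\
      Forall (fun p => snd p (proj1_sig mu (fst p))) l /\
      (forall nu, Forall (fun p => snd p (proj1_sig nu (fst p))) l -> W nu).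

Definition I_open (X : CompHaus) := pointwise_open (is_maxplus X).
Definition J_open (X : CompHaus) := pointwise_open (is_maxmin X).

Lemma maxplus_precomp (X Y : CompHaus) (f : cmap X Y) (mu : Cfun X -> R) :
  is_maxplus X mu -> is_maxplus Y (fun psi => mu (precomp f psi)).
Proof.
  intros [h1 [h2 h3]]; split; [|split].
  - intros c phi H. apply h1. intros x. simpl. apply H.
  - intros phi psi chi H. apply h2. intros x. simpl. apply H.
  - intros c phi chi H. apply h3. intros x. simpl. apply H.
Qed.

Lemma maxmin_precomp (X Y : CompHaus) (f : cmap X Y) (mu : Cfun X -> R) :
  is_maxmin X mu -> is_maxmin Y (fun psi => mu (precomp f psi)).
Proof.
  intros [h1 [h2 h3]]; split; [|split].
  - intros c phi H. apply h1. intros x. simpl. apply H.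
  - intros phi psi chi H. apply h2. intros x. simpl. apply H.
  - intros c phi chi H. apply h3. intros x. simpl. apply H.
Qed.

Definition Imap {X Y : CompHaus} (f : cmap X Y) (mu : IX X) : IX Y :=
  exist _ (fun psi => proj1_sig mu (precomp f psi))
    (maxplus_precomp X Y f _ (proj2_sig mu)).

Definition Jmap {X Y : CompHaus} (f : cmap X Y) (mu : JX X) : JX Y :=
  exist _ (fun psi => proj1_sig mu (precomp f psi))
    (maxmin_precomp X Y f _ (proj2_sig mu)).

(* A max-plus measure has the form mu(phi) = max_x (phi x + lambda x) for a density lambda with
   values in [-oo, 0], a max-min measure the form nu(phi) = max_x min (phi x, kappa x) for a
   density kappa with values in [-oo, +oo].  The increasing bijection tr : R -> (-oo, 0) thus gives
   a bijection mu <-> nu via lambda = tr o kappa.  Densities are never constructed: the level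
   weight sup_{phi >= s} lambda is the limit of mu (K min (phi - s, 0)) as K -> +oo, and
   sup_{phi >= s} kappa >= c iff nu (c + K min (phi - s, 0)) >= c for all K.  Hence
     k(mu)(phi) = sup {r | weight of {phi >= r} under mu is >= tr r},
     k^-1(nu)(psi) = sup {s + tr c | weight of {psi >= s} under nu is >= c}.
   Up to any e > 0, each value of k(mu) or k^-1(nu) is controlled by finitely many values of the
   measure, so both maps are continuous for the pointwise topologies; naturality holds because
   the test functions commute with precomposition. *)
From Stdlib Require Import Reals List Lra Psatz ClassicalEpsilon ProofIrrelevance
  FunctionalExtensionality PropExtensionality Classical.
Import ListNotations.
Open Scope R_scope.

Ltac solve_minmax := unfold Rmin, Rmax in *;
  repeat match goal with
         | |- context [Rle_dec ?a ?b] => destruct (Rle_dec a b)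
         | H : context [Rle_dec ?a ?b] |- _ => destruct (Rle_dec a b)
         end; try nra.

Lemma Rle_abs_both x : x <= Rabs x /\ - x <= Rabs x.
Proof. split; [apply Rle_abs | rewrite <- Rabs_Ropp; apply Rle_abs]. Qed.

Lemma Rabs_le_bounds x M : Rabs x <= M -> - M <= x <= M.
Proof. intros h. destruct (Rle_abs_both x). lra. Qed.

(* [tr] is an increasing 1-Lipschitz bijection of R onto (-oo, 0), with inverse [tr_inv]. *)
Definition tr (r : R) : R := (r - sqrt (r * r + 4)) / 2.
Definition tr_inv (b : R) : R := b - 1 / b.

Lemma sqrt_sqr_add4 r :
  sqrt (r * r + 4) * sqrt (r * r + 4) = r * r + 4 /\ r < sqrt (r * r + 4) /\ - r < sqrt (r * r + 4).
Proof.
  assert (h : sqrt (r * r + 4) * sqrt (r * r + 4) = r * r + 4) by (apply sqrt_sqrt; nra).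
  pose proof (sqrt_pos (r * r + 4)). repeat split; nra.
Qed.

Lemma tr_neg r : tr r < 0.
Proof. unfold tr. destruct (sqrt_sqr_add4 r) as [_ [h _]]. lra. Qed.

Lemma tr_sub_bounds x y : x <= y -> 0 <= tr y - tr x <= y - x.
Proof.
  intros h. unfold tr.
  destruct (sqrt_sqr_add4 x) as [a1 [a2 a3]], (sqrt_sqr_add4 y) as [b1 [b2 b3]].
  set (A := sqrt (x * x + 4)) in *. set (B := sqrt (y * y + 4)) in *.
  assert (E : (B - A) * (A + B) = (y - x) * (y + x)) by nra.
  assert (B - A <= y - x /\ A - B <= y - x) by nra.
  lra.
Qed.

Lemma tr_lt x y : x < y -> tr x < tr y.
Proof.
  intros h. unfold tr.
  destruct (sqrt_sqr_add4 x) as [a1 [a2 a3]], (sqrt_sqr_add4 y) as [b1 [b2 b3]].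
  set (A := sqrt (x * x + 4)) in *. set (B := sqrt (y * y + 4)) in *.
  assert (E : (B - A) * (A + B) = (y - x) * (y + x)) by nra.
  assert (B - A < y - x) by nra.
  lra.
Qed.

Lemma tr_le x y : x <= y -> tr x <= tr y.
Proof. intros h. pose proof (tr_sub_bounds x y h). lra. Qed.

Lemma tr_tr_inv b : b < 0 -> tr (tr_inv b) = b.
Proof.
  intros hb. unfold tr, tr_inv.
  assert (E : (b - 1 / b) * (b - 1 / b) + 4 = (- (b + 1 / b)) * (- (b + 1 / b))) by (field; lra).
  assert (1 / b < 0) by (unfold Rdiv; rewrite Rmult_1_l; apply Rinv_lt_0_compat; lra).
  rewrite E, sqrt_square by lra. field; lra.
Qed.

Definition lipschitz (h : R -> R) : Prop :=
  exists L, 0 <= L /\ forall x y, Rabs (h x - h y) <= L * Rabs (x - y).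

Lemma lipschitz_const c : lipschitz (fun _ => c).
Proof.
  exists 0. split; [lra|]. intros x y.
  rewrite Rminus_diag, Rabs_R0. pose proof (Rabs_pos (x - y)). nra.
Qed.

Lemma lipschitz_id : lipschitz (fun y => y).
Proof. exists 1. split; [lra|]. intros. lra. Qed.

Lemma lipschitz_scal c f : lipschitz f -> lipschitz (fun y => c * f y).
Proof.
  intros [L [hL H]]. exists (Rabs c * L). pose proof (Rabs_pos c). split; [nra|].
  intros x y. replace (c * f x - c * f y) with (c * (f x - f y)) by ring.
  rewrite Rabs_mult. specialize (H x y). nra.
Qed.

Section LipschitzBinop.
Variable op : R -> R -> R.
Hypothesis op_sub_le : forall a b c d, Rabs (op a b - op c d) <= Rabs (a - c) + Rabs (b - d).

Lemma lipschitz_binop f h : lipschitz f -> lipschitz h -> lipschitz (fun y => op (f y) (h y)).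
Proof.
  intros [L1 [p1 H1]] [L2 [p2 H2]]. exists (L1 + L2). split; [lra|]. intros x y.
  specialize (H1 x y); specialize (H2 x y).
  eapply Rle_trans; [apply op_sub_le | lra].
Qed.

End LipschitzBinop.

Lemma Rplus_sub_le a b c d : Rabs (a + b - (c + d)) <= Rabs (a - c) + Rabs (b - d).
Proof. replace (a + b - (c + d)) with ((a - c) + (b - d)) by ring. apply Rabs_triang. Qed.

Lemma Rminus_sub_le a b c d : Rabs (a - b - (c - d)) <= Rabs (a - c) + Rabs (b - d).
Proof.
  replace (a - b - (c - d)) with ((a - c) + - (b - d)) by ring.
  rewrite <- (Rabs_Ropp (b - d)). apply Rabs_triang.
Qed.

Lemma Rmin_sub_le a b c d : Rabs (Rmin a b - Rmin c d) <= Rabs (a - c) + Rabs (b - d).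
Proof.
  destruct (Rle_abs_both (a - c)), (Rle_abs_both (b - d)).
  apply Rabs_le. solve_minmax; lra.
Qed.

Lemma Rmax_sub_le a b c d : Rabs (Rmax a b - Rmax c d) <= Rabs (a - c) + Rabs (b - d).
Proof.
  destruct (Rle_abs_both (a - c)), (Rle_abs_both (b - d)).
  apply Rabs_le. solve_minmax; lra.
Qed.

Ltac solve_lipschitz := match goal with
  | |- lipschitz (fun _ => ?c) => apply lipschitz_const
  | |- lipschitz (fun y => y) => apply lipschitz_id
  | |- lipschitz (fun y => Rmin (@?f y) (@?h y)) =>
      apply (lipschitz_binop Rmin Rmin_sub_le f h); solve_lipschitz
  | |- lipschitz (fun y => Rmax (@?f y) (@?h y)) =>
      apply (lipschitz_binop Rmax Rmax_sub_le f h); solve_lipschitz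
  | |- lipschitz (fun y => @?f y + @?h y) =>
      apply (lipschitz_binop Rplus Rplus_sub_le f h); solve_lipschitz
  | |- lipschitz (fun y => @?f y - @?h y) =>
      apply (lipschitz_binop Rminus Rminus_sub_le f h); solve_lipschitz
  | |- lipschitz (fun y => ?c * @?f y) => apply (lipschitz_scal c f); solve_lipschitz
  end.

Lemma lipschitz_continuous h : lipschitz h -> continuous R_open R_open h.
Proof.
  intros [L [pL H]] V hV y hy. destruct (hV _ hy) as [e [he He]].
  exists (e / (L + 1)). split; [apply Rdiv_lt_0_compat; lra|].
  intros z hz. apply He. eapply Rle_lt_trans; [apply H|].
  apply Rmult_lt_compat_l with (r := L + 1) in hz; [|lra].
  replace ((L + 1) * (e / (L + 1))) with e in hz by (field; lra).
  pose proof (Rabs_pos (z - y)). nra.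
Qed.

Definition postcomp {X : CompHaus} (phi : Cfun X) (h : R -> R) (H : lipschitz h) : Cfun X :=
  exist _ (fun x => h (proj1_sig phi x))
    (continuous_comp _ _ _ _ _ (proj2_sig phi) (lipschitz_continuous h H)).

(* A junk value when [E] has no least upper bound. *)
Definition sup (E : R -> Prop) : R := epsilon (inhabits 0) (fun m => is_lub E m).

Lemma sup_eq E m : is_lub E m -> sup E = m.
Proof. intros h. apply (is_lub_u E); [unfold sup; apply epsilon_spec; eauto | exact h]. Qed.

Lemma sup_is_lub E : (exists m, is_upper_bound E m) -> (exists x, E x) -> is_lub E (sup E).
Proof.
  intros h1 h2. destruct (completeness E h1 h2) as [m hm]. rewrite (sup_eq E m hm). exact hm.
Qed.

Lemma is_lub_approx E v r : is_lub E v -> r < v -> exists x, E x /\ r < x.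
Proof.
  intros [h1 h2] h. apply NNPP. intros hn. assert (v <= r); [|lra].
  apply h2. intros x hx. destruct (Rle_or_lt x r); auto. exfalso; eauto.
Qed.

Lemma is_lub_union E E1 E2 a b : is_lub E1 a -> is_lub E2 b ->
  (forall u, E u <-> E1 u \/ E2 u) -> is_lub E (Rmax a b).
Proof.
  intros [h1 h2] [h3 h4] H. split.
  - intros u hu. apply H in hu. destruct hu as [hu|hu]; [apply h1 in hu|apply h3 in hu]; solve_minmax.
  - intros m hm. assert (a <= m) by (apply h2; intros u hu; apply hm, H; auto).
    assert (b <= m) by (apply h4; intros u hu; apply hm, H; auto). solve_minmax.
Qed.

Lemma is_lub_translate E E1 a d : is_lub E1 a -> (forall u, E u <-> E1 (u - d)) ->
  is_lub E (d + a).
Proof.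
  intros [h1 h2] H. split.
  - intros u hu. apply H, h1 in hu. lra.
  - intros m hm. assert (a <= m - d); [|lra]. apply h2. intros u hu.
    assert (hu' : E (u + d)) by (apply H; replace (u + d - d) with u by ring; auto).
    apply hm in hu'. lra.
Qed.

Lemma Cfun_bounded {X : CompHaus} (phi : Cfun X) :
  exists M, forall x, - M <= proj1_sig phi x <= M.
Proof.
  pose (F := fun U : X -> Prop => exists n : nat, U = (fun x => Rabs (proj1_sig phi x) < INR n)).
  assert (hF : forall U, F U -> opens X U).
  { intros U [n ->]. apply (proj2_sig phi (fun y => Rabs y < INR n)).
    intros y hy. exists (INR n - Rabs y). split; [lra|]. intros z hz.
    pose proof (Rabs_triang (z - y) y) as htri. replace (z - y + y) with z in htri by ring. lra. }
  assert (hC : forall a, exists U, F U /\ U a).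
  { intros a. destruct (INR_unbounded (Rabs (proj1_sig phi a))) as [n hn].
    exists (fun x => Rabs (proj1_sig phi x) < INR n). split; [exists n; reflexivity | simpl; lra]. }
  destruct (opens_compact X F hF hC) as [l [hl hcov]].
  assert (exists M, forall U, In U l -> forall x, U x -> Rabs (proj1_sig phi x) <= M) as [M hM].
  { clear hcov. induction l as [|U l IH].
    - exists 0. intros U [].
    - inversion hl as [|? ? [n ->] hl']; subst. destruct (IH hl') as [M hM].
      exists (Rmax M (INR n)). intros U [<-|hU] x hx.
      + simpl in hx. pose proof (Rmax_r M (INR n)). lra.
      + pose proof (hM U hU x hx). pose proof (Rmax_l M (INR n)). lra. }
  exists M. intros x. destruct (hcov x) as [U [hU hx]]. apply Rabs_le_bounds. eauto.
Qed.

(* [ramp psi s c K] equals [c] on [{psi >= s}] and tends to [-oo] elsewhere as [K -> +oo]. *)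
Definition ramp {X : CompHaus} (psi : Cfun X) (s c K : R) : Cfun X :=
  postcomp psi (fun y => c + K * Rmin (y - s) 0) ltac:(solve_lipschitz).

Lemma forall_le_Rmax_antitone (f h : R -> R) b :
  (forall K K', 0 <= K -> K <= K' -> f K' <= f K) ->
  (forall K K', 0 <= K -> K <= K' -> h K' <= h K) ->
  (forall K, 0 <= K -> b <= Rmax (f K) (h K)) ->
  (forall K, 0 <= K -> b <= f K) \/ (forall K, 0 <= K -> b <= h K).
Proof.
  intros hf hh H. apply NNPP. intros hn. apply not_or_and in hn as [n1 n2].
  apply not_all_ex_not in n1 as [K1 n1]. apply imply_to_and in n1 as [k1 n1].
  apply not_all_ex_not in n2 as [K2 n2]. apply imply_to_and in n2 as [k2 n2].
  pose proof (hf K1 (Rmax K1 K2) k1 (Rmax_l K1 K2)).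
  pose proof (hh K2 (Rmax K1 K2) k2 (Rmax_r K1 K2)).
  specialize (H (Rmax K1 K2) ltac:(pose proof (Rmax_l K1 K2); lra)). solve_minmax.
Qed.

Section Maxitive.
Context {X : CompHaus}.
Implicit Types (mu : Cfun X -> R) (phi psi : Cfun X).

Definition maxitive mu : Prop :=
  (forall (c : R) phi, (forall x, proj1_sig phi x = c) -> mu phi = c) /\
  (forall phi psi chi,
     (forall x, proj1_sig chi x = Rmax (proj1_sig phi x) (proj1_sig psi x)) ->
     mu chi = Rmax (mu phi) (mu psi)).

Lemma maxplus_maxitive mu : is_maxplus X mu -> maxitive mu.
Proof. intros [h1 [h2 _]]. split; auto. Qed.

Lemma maxmin_maxitive mu : is_maxmin X mu -> maxitive mu.
Proof. intros [h1 [h2 _]]. split; auto. Qed.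

Variable mu : Cfun X -> R.
Hypothesis mu_maxitive : maxitive mu.

Lemma maxitive_const phi c : (forall x, proj1_sig phi x = c) -> mu phi = c.
Proof. apply (proj1 mu_maxitive). Qed.

Lemma maxitive_mono phi psi :
  (forall x, proj1_sig phi x <= proj1_sig psi x) -> mu phi <= mu psi.
Proof.
  intros H. rewrite ((proj2 mu_maxitive) phi psi psi); [apply Rmax_l|].
  intros x. rewrite Rmax_right; auto.
Qed.

Lemma maxitive_ext phi psi : (forall x, proj1_sig phi x = proj1_sig psi x) -> mu phi = mu psi.
Proof. intros H. apply Rle_antisym; apply maxitive_mono; intros x; rewrite H; lra. Qed.

Lemma maxitive_le_const phi c : (forall x, proj1_sig phi x <= c) -> mu phi <= c.
Proof.
  intros H. rewrite <- (maxitive_const (postcomp phi (fun _ => c) ltac:(solve_lipschitz)) c)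
    by reflexivity.
  apply maxitive_mono. exact H.
Qed.

Lemma maxitive_ge_const phi c : (forall x, c <= proj1_sig phi x) -> c <= mu phi.
Proof.
  intros H. rewrite <- (maxitive_const (postcomp phi (fun _ => c) ltac:(solve_lipschitz)) c)
    by reflexivity.
  apply maxitive_mono. exact H.
Qed.

Lemma maxitive_le_Rmax_const phi psi c :
  (forall x, proj1_sig phi x <= Rmax (proj1_sig psi x) c) -> mu phi <= Rmax (mu psi) c.
Proof.
  intros H.
  set (cst := postcomp psi (fun _ => c) ltac:(solve_lipschitz)).
  rewrite <- (maxitive_const cst c) by reflexivity.
  rewrite <- ((proj2 mu_maxitive) psi cst
                (postcomp psi (fun y => Rmax y c) ltac:(solve_lipschitz))) by reflexivity.
  apply maxitive_mono. exact H.
Qed.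

Lemma maxitive_ramp0 psi s c : mu (ramp psi s c 0) = c.
Proof. apply maxitive_const. intros x. simpl. ring. Qed.

Lemma maxitive_ramp_antitone psi s c K K' : 0 <= K -> K <= K' ->
  mu (ramp psi s c K') <= mu (ramp psi s c K).
Proof. intros h1 h2. apply maxitive_mono. intros x; simpl. solve_minmax. Qed.

Lemma maxitive_ramp_max phi psi ch s c K :
  (forall x, proj1_sig ch x = Rmax (proj1_sig phi x) (proj1_sig psi x)) -> 0 <= K ->
  mu (ramp ch s c K) = Rmax (mu (ramp phi s c K)) (mu (ramp psi s c K)).
Proof. intros hch hK. apply (proj2 mu_maxitive). intros x. simpl. rewrite hch. solve_minmax. Qed.

End Maxitive.

Lemma maxplus_le_shift {X : CompHaus} (mu : Cfun X -> R) (phi psi : Cfun X) c :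
  is_maxplus X mu ->
  (forall x, proj1_sig phi x <= proj1_sig psi x + c) -> mu phi <= mu psi + c.
Proof.
  intros hm H. pose proof (maxplus_maxitive mu hm) as hc. destruct hm as [_ [_ hshift]].
  set (psi' := postcomp psi (fun y => c + y) ltac:(solve_lipschitz)).
  assert (E : mu psi' = c + mu psi) by (apply hshift; reflexivity).
  assert (mu phi <= mu psi') by (apply (maxitive_mono mu hc); intros x; simpl; specialize (H x); lra).
  lra.
Qed.

Lemma maxmin_transfer {X : CompHaus} (nu : Cfun X -> R) (phi psi : Cfun X) a b :
  is_maxmin X nu -> a <= nu phi ->
  (forall x, Rmin (proj1_sig phi x) a <= Rmax (proj1_sig psi x) b) -> b < a -> a <= nu psi.
Proof.
  intros hm ha H hb. pose proof (maxmin_maxitive nu hm) as hc. destruct hm as [_ [_ hcap]].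
  set (phi' := postcomp phi (fun y => Rmin a y) ltac:(solve_lipschitz)).
  assert (E : nu phi' = Rmin a (nu phi)) by (apply hcap; reflexivity).
  assert (hle : nu phi' <= Rmax (nu psi) b).
  { apply (maxitive_le_Rmax_const nu hc). intros x. simpl. rewrite Rmin_comm. apply H. }
  rewrite E, Rmin_left in hle by lra. solve_minmax.
Qed.

(* For [mu] with density [lambda] this says [sup_{psi >= s} lambda >= b]. *)
Definition mp_level_ge {X : CompHaus} (mu : Cfun X -> R) (psi : Cfun X) (s b : R) : Prop :=
  forall K, 0 <= K -> b <= mu (ramp psi s 0 K).

Definition to_maxmin_set {X : CompHaus} (mu : Cfun X -> R) (phi : Cfun X) (r : R) : Prop :=
  mp_level_ge mu phi r (tr r).

Definition to_maxmin {X : CompHaus} (mu : Cfun X -> R) (phi : Cfun X) : R :=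
  sup (to_maxmin_set mu phi).

Lemma to_maxmin_eq {X : CompHaus} (mu : Cfun X -> R) (phi : Cfun X) v :
  (forall r, to_maxmin_set mu phi r <-> r <= v) -> to_maxmin mu phi = v.
Proof.
  intros H. apply sup_eq. split.
  - intros r hr. apply H; auto.
  - intros b hb. apply hb, H. lra.
Qed.

Section ToMaxMin.
Context {X : CompHaus}.
Variable mu : Cfun X -> R.
Implicit Types (phi psi : Cfun X).

Section Maxitive.
Hypothesis mu_maxitive : maxitive mu.

Lemma mp_level_ge_antitone psi r r' b b' : r' <= r -> b' <= b ->
  mp_level_ge mu psi r b -> mp_level_ge mu psi r' b'.
Proof.
  intros h1 h2 H K hK. specialize (H K hK).
  assert (mu (ramp psi r 0 K) <= mu (ramp psi r' 0 K)); [|lra].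
  apply (maxitive_mono mu mu_maxitive). intros x; simpl. solve_minmax.
Qed.

Lemma mp_level_ge_mono_fun phi psi s b : (forall x, proj1_sig phi x <= proj1_sig psi x) ->
  mp_level_ge mu phi s b -> mp_level_ge mu psi s b.
Proof.
  intros hle H K hK. specialize (H K hK).
  assert (mu (ramp phi s 0 K) <= mu (ramp psi s 0 K)); [|lra].
  apply (maxitive_mono mu mu_maxitive). intros x; simpl. specialize (hle x). solve_minmax.
Qed.

Lemma to_maxmin_set_antitone phi r r' : r' <= r ->
  to_maxmin_set mu phi r -> to_maxmin_set mu phi r'.
Proof. intros h. apply mp_level_ge_antitone; auto. apply tr_le; auto. Qed.

Lemma to_maxmin_set_le phi M r : (forall x, proj1_sig phi x <= M) ->
  to_maxmin_set mu phi r -> r <= M.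
Proof.
  intros hM H. destruct (Rle_or_lt r M) as [|hr]; auto. exfalso.
  pose proof (tr_neg r).
  set (K := (1 - tr r) / (r - M)).
  assert (hK : K * (r - M) = 1 - tr r) by (unfold K; field; lra).
  assert (hK0 : 0 <= K) by (unfold K; apply Rlt_le, Rdiv_lt_0_compat; lra).
  specialize (H K hK0).
  assert (mu (ramp phi r 0 K) <= tr r - 1); [|lra].
  apply (maxitive_le_const mu mu_maxitive). intros x; simpl. specialize (hM x). solve_minmax.
Qed.

Lemma to_maxmin_set_of_ge phi r : (forall x, r <= proj1_sig phi x) -> to_maxmin_set mu phi r.
Proof.
  intros hr K hK. pose proof (tr_neg r).
  assert (0 <= mu (ramp phi r 0 K)); [|lra].
  apply (maxitive_ge_const mu mu_maxitive). intros x. simpl. specialize (hr x). solve_minmax.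
Qed.

Lemma to_maxmin_lub phi : is_lub (to_maxmin_set mu phi) (to_maxmin mu phi).
Proof.
  destruct (Cfun_bounded phi) as [M hM]. apply sup_is_lub.
  - exists M. intros r. apply to_maxmin_set_le. intros x. apply hM.
  - exists (- M). apply to_maxmin_set_of_ge. intros x. apply hM.
Qed.

Lemma to_maxmin_set_const phi d r : (forall x, proj1_sig phi x = d) ->
  (to_maxmin_set mu phi r <-> r <= d).
Proof.
  intros hd. split.
  - apply to_maxmin_set_le. intros x; rewrite hd; lra.
  - intros hr. apply to_maxmin_set_of_ge. intros x; rewrite hd; lra.
Qed.

Lemma to_maxmin_set_max phi psi ch r :
  (forall x, proj1_sig ch x = Rmax (proj1_sig phi x) (proj1_sig psi x)) ->
  (to_maxmin_set mu ch r <-> to_maxmin_set mu phi r \/ to_maxmin_set mu psi r).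
Proof.
  intros hch. unfold to_maxmin_set, mp_level_ge. split.
  - intros H. apply forall_le_Rmax_antitone;
      try (intros; apply (maxitive_ramp_antitone mu mu_maxitive); auto).
    intros K hK. rewrite <- (maxitive_ramp_max mu mu_maxitive phi psi ch); auto.
  - intros [H|H] K hK; specialize (H K hK);
      rewrite (maxitive_ramp_max mu mu_maxitive phi psi ch) by auto; solve_minmax.
Qed.

Lemma to_maxmin_set_min phi ch c r :
  (forall x, proj1_sig ch x = Rmin c (proj1_sig phi x)) ->
  (to_maxmin_set mu ch r <-> r <= c /\ to_maxmin_set mu phi r).
Proof.
  intros hch. split.
  - intros H. split.
    + apply (to_maxmin_set_le ch); auto. intros x; rewrite hch; apply Rmin_l.
    + apply (mp_level_ge_mono_fun ch); auto. intros x; rewrite hch; apply Rmin_r.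
  - intros [hr H] K hK. specialize (H K hK).
    rewrite (maxitive_ext mu mu_maxitive (ramp ch r 0 K) (ramp phi r 0 K)); auto.
    intros x; simpl. rewrite hch. solve_minmax.
Qed.

End Maxitive.

Hypothesis mu_maxplus : is_maxplus X mu.
Let mu_maxitive := maxplus_maxitive mu mu_maxplus.

Lemma mp_level_ge_le psi s b : mp_level_ge mu psi s b -> s + b <= mu psi.
Proof.
  intros H. specialize (H 1 ltac:(lra)).
  assert (mu (ramp psi s 0 1) <= mu psi + - s); [|lra].
  apply (maxplus_le_shift mu _ _ _ mu_maxplus). intros x. simpl. solve_minmax.
Qed.

Lemma mp_level_ge_nonpos psi s b : mp_level_ge mu psi s b -> b <= 0.
Proof. intros H. specialize (H 0 ltac:(lra)). rewrite maxitive_ramp0 in H; auto. Qed.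

(* Closedness in [r]: moving [r] by [d] changes [mu (ramp phi r 0 K)] by at most [K d] and
   [tr r] by at most [d]. *)
Lemma to_maxmin_set_sup phi : to_maxmin_set mu phi (to_maxmin mu phi).
Proof.
  set (v := to_maxmin mu phi). intros K hK. apply Rle_plus_epsilon. intros e he.
  set (r := v - e / (K + 1)).
  assert (hr : r < v) by (unfold r; assert (0 < e / (K + 1)) by (apply Rdiv_lt_0_compat; lra); lra).
  destruct (is_lub_approx _ _ _ (to_maxmin_lub mu_maxitive phi) hr) as [x [hx hrx]].
  assert (hPr : to_maxmin_set mu phi r) by (apply (to_maxmin_set_antitone mu_maxitive phi x); auto; lra).
  specialize (hPr K hK).
  assert (mu (ramp phi r 0 K) <= mu (ramp phi v 0 K) + K * (v - r)).
  { apply (maxplus_le_shift mu _ _ _ mu_maxplus). intros y; simpl. solve_minmax. }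
  pose proof (tr_sub_bounds r v ltac:(lra)).
  assert ((K + 1) * (v - r) = e) by (unfold r; field; lra).
  nra.
Qed.

Lemma to_maxmin_set_iff phi r : to_maxmin_set mu phi r <-> r <= to_maxmin mu phi.
Proof.
  split.
  - intros h. apply (proj1 (to_maxmin_lub mu_maxitive phi)). auto.
  - intros h. apply (to_maxmin_set_antitone mu_maxitive phi (to_maxmin mu phi)); auto.
    apply to_maxmin_set_sup.
Qed.

Lemma to_maxmin_maxmin : is_maxmin X (to_maxmin mu).
Proof.
  split; [|split].
  - intros c phi H. apply to_maxmin_eq. intros r. apply to_maxmin_set_const; auto.
  - intros phi psi ch H. apply to_maxmin_eq. intros r.
    rewrite (to_maxmin_set_max mu_maxitive phi psi ch r H), !to_maxmin_set_iff. solve_minmax.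
  - intros c phi ch H. apply to_maxmin_eq. intros r.
    rewrite (to_maxmin_set_min mu_maxitive phi ch c r H), !to_maxmin_set_iff. solve_minmax.
Qed.

End ToMaxMin.

(* For [nu] with density [kappa] this says [sup_{psi >= s} kappa >= c]. *)
Definition mm_level_ge {X : CompHaus} (nu : Cfun X -> R) (psi : Cfun X) (s c : R) : Prop :=
  forall K, 0 <= K -> c <= nu (ramp psi s c K).

Definition to_maxplus_set {X : CompHaus} (nu : Cfun X -> R) (psi : Cfun X) (u : R) : Prop :=
  exists s c, mm_level_ge nu psi s c /\ u = s + tr c.

Definition to_maxplus {X : CompHaus} (nu : Cfun X -> R) (psi : Cfun X) : R :=
  sup (to_maxplus_set nu psi).

Lemma ramp_rescale K r t y : 0 < K -> t <= 0 ->
  Rmin (0 + K * Rmin (y - r) 0 - t) 0 = K * Rmin (y - (r + t / K)) 0.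
Proof.
  intros hK ht. set (u := t / K). assert (E : t = K * u) by (unfold u; field; lra).
  assert (u <= 0) by (unfold u, Rdiv; assert (0 < / K) by (apply Rinv_0_lt_compat; lra); nra).
  rewrite E. solve_minmax.
Qed.

Section ToMaxPlus.
Context {X : CompHaus}.
Variable nu : Cfun X -> R.
Implicit Types (phi psi : Cfun X).

Section Maxitive.
Hypothesis nu_maxitive : maxitive nu.

Lemma mm_level_ge_antitone psi s s' c : s' <= s -> mm_level_ge nu psi s c -> mm_level_ge nu psi s' c.
Proof.
  intros h H K hK. specialize (H K hK).
  assert (nu (ramp psi s c K) <= nu (ramp psi s' c K)); [|lra].
  apply (maxitive_mono nu nu_maxitive). intros x; simpl. solve_minmax.
Qed.

Lemma mm_level_ge_le_bound psi s c M : (forall x, proj1_sig psi x <= M) ->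
  mm_level_ge nu psi s c -> s <= M.
Proof.
  intros hM H. destruct (Rle_or_lt s M) as [|hs]; auto. exfalso.
  set (K := 1 / (s - M)).
  assert (hK : K * (s - M) = 1) by (unfold K; field; lra).
  assert (hK0 : 0 <= K) by (unfold K; apply Rlt_le, Rdiv_lt_0_compat; lra).
  specialize (H K hK0).
  assert (nu (ramp psi s c K) <= c - 1); [|lra].
  apply (maxitive_le_const nu nu_maxitive). intros x; simpl. specialize (hM x). solve_minmax.
Qed.

Lemma mm_level_ge_of_ge psi s c : (forall x, s <= proj1_sig psi x) -> mm_level_ge nu psi s c.
Proof.
  intros hs K hK. rewrite (maxitive_const nu nu_maxitive (ramp psi s c K) c); [lra|].
  intros x; simpl. specialize (hs x). solve_minmax.
Qed.

Lemma mm_level_ge_const phi d s c : (forall x, proj1_sig phi x = d) ->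
  (mm_level_ge nu phi s c <-> s <= d).
Proof.
  intros hd. split.
  - apply mm_level_ge_le_bound. intros x; rewrite hd; lra.
  - intros hs. apply mm_level_ge_of_ge. intros x; rewrite hd; lra.
Qed.

Lemma mm_level_ge_max phi psi ch s c :
  (forall x, proj1_sig ch x = Rmax (proj1_sig phi x) (proj1_sig psi x)) ->
  (mm_level_ge nu ch s c <-> mm_level_ge nu phi s c \/ mm_level_ge nu psi s c).
Proof.
  intros hch. unfold mm_level_ge. split.
  - intros H. apply forall_le_Rmax_antitone;
      try (intros; apply (maxitive_ramp_antitone nu nu_maxitive); auto).
    intros K hK. rewrite <- (maxitive_ramp_max nu nu_maxitive phi psi ch); auto.
  - intros [H|H] K hK; specialize (H K hK);
      rewrite (maxitive_ramp_max nu nu_maxitive phi psi ch) by auto; solve_minmax.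
Qed.

Lemma mm_level_ge_translate psi ch d s c :
  (forall x, proj1_sig ch x = d + proj1_sig psi x) ->
  (mm_level_ge nu ch s c <-> mm_level_ge nu psi (s - d) c).
Proof.
  intros hch.
  assert (E : forall K, nu (ramp ch s c K) = nu (ramp psi (s - d) c K)).
  { intros K. apply (maxitive_ext nu nu_maxitive). intros x; simpl. rewrite hch.
    replace (d + proj1_sig psi x - s) with (proj1_sig psi x - (s - d)) by ring. reflexivity. }
  unfold mm_level_ge. setoid_rewrite E. reflexivity.
Qed.

Lemma mm_level_ge_ramp phi r K t c : 0 < K -> t <= 0 ->
  (mm_level_ge nu (ramp phi r 0 K) t c <-> mm_level_ge nu phi (r + t / K) c).
Proof.
  intros hK ht.
  assert (E : forall K', nu (ramp (ramp phi r 0 K) t c K') = nu (ramp phi (r + t / K) c (K' * K))).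
  { intros K'. apply (maxitive_ext nu nu_maxitive). intros x; simpl.
    rewrite ramp_rescale by auto. ring. }
  split.
  - intros H K'' hK''.
    assert (hK' : 0 <= K'' / K)
      by (unfold Rdiv; assert (0 < / K) by (apply Rinv_0_lt_compat; lra); nra).
    specialize (H _ hK'). rewrite E in H. replace (K'' / K * K) with K'' in H by (field; lra).
    exact H.
  - intros H K' hK'. rewrite E. apply H. nra.
Qed.

Lemma mm_level_ge_ramp_nonpos phi r K t c : 0 <= K ->
  mm_level_ge nu (ramp phi r 0 K) t c -> t <= 0.
Proof. intros hK. apply mm_level_ge_le_bound. intros x; simpl. solve_minmax. Qed.

Lemma to_maxplus_lub psi : is_lub (to_maxplus_set nu psi) (to_maxplus nu psi).
Proof.
  destruct (Cfun_bounded psi) as [M hM]. apply sup_is_lub.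
  - exists M. intros u [s [c [hB ->]]]. pose proof (tr_neg c).
    assert (s <= M); [|lra]. apply (mm_level_ge_le_bound psi s c); auto. intros x; apply hM.
  - exists (- M + tr 0), (- M), 0. split; auto. apply mm_level_ge_of_ge. intros x; apply hM.
Qed.

Lemma to_maxplus_ge psi s c : mm_level_ge nu psi s c -> s + tr c <= to_maxplus nu psi.
Proof. intros H. apply (proj1 (to_maxplus_lub psi)). exists s, c; auto. Qed.

Lemma to_maxplus_maxplus : is_maxplus X (to_maxplus nu).
Proof.
  split; [|split].
  - intros d phi H. apply sup_eq. split.
    + intros u [s [c [hB ->]]]. apply (mm_level_ge_const phi d s c H) in hB.
      pose proof (tr_neg c). lra.
    + intros b hb. apply Rle_plus_epsilon. intros e he.
      assert (hb' : d + tr (tr_inv (- e)) <= b); [|rewrite tr_tr_inv in hb'; lra].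
      apply hb. exists d, (tr_inv (- e)). split; auto. apply (mm_level_ge_const phi d); auto; lra.
  - intros phi psi ch H. apply sup_eq.
    apply (is_lub_union _ (to_maxplus_set nu phi) (to_maxplus_set nu psi)); try apply to_maxplus_lub.
    intros u. split.
    + intros [s [c [hB ->]]]. apply (mm_level_ge_max phi psi ch s c H) in hB.
      destruct hB; [left|right]; exists s, c; auto.
    + intros [[s [c [hB ->]]]|[s [c [hB ->]]]]; exists s, c; split; auto;
        apply (mm_level_ge_max phi psi ch s c H); auto.
  - intros d phi ch H. apply sup_eq.
    apply (is_lub_translate _ (to_maxplus_set nu phi)); try apply to_maxplus_lub.
    intros u. split.
    + intros [s [c [hB ->]]]. exists (s - d), c. split; [|ring].
      apply (mm_level_ge_translate phi ch d s c H); auto.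
    + intros [s [c [hB hu]]]. exists (s + d), c. split; [|lra].
      apply (mm_level_ge_translate phi ch d (s + d) c H). replace (s + d - d) with s by ring; auto.
Qed.

End Maxitive.

Hypothesis nu_maxmin : is_maxmin X nu.

Lemma mm_level_ge_le psi s c : mm_level_ge nu psi s c -> Rmin s c <= nu psi.
Proof.
  intros H. apply Rle_plus_epsilon. intros e he.
  set (m := Rmin s c - e).
  assert (hm1 : m <= s - e) by (unfold m; pose proof (Rmin_l s c); lra).
  assert (hm2 : m <= c - e) by (unfold m; pose proof (Rmin_r s c); lra).
  set (K := (c - m + e) / e).
  assert (hK : K * e = c - m + e) by (unfold K; field; lra).
  assert (hK0 : 0 <= K) by (unfold K; apply Rlt_le, Rdiv_lt_0_compat; lra).
  specialize (H K hK0).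
  assert (m <= nu psi); [|unfold m in *; lra].
  apply (maxmin_transfer nu (ramp psi s c K) psi m (m - e)); [auto|lra| |lra].
  intros x; simpl. set (y := proj1_sig psi x). solve_minmax.
Qed.

Lemma mm_level_ge_of_le psi s c : c <= nu psi -> s < c -> mm_level_ge nu psi s c.
Proof.
  intros h1 h2 K hK. apply (maxmin_transfer nu psi (ramp psi s c K) c s); auto.
  intros x; simpl. set (y := proj1_sig psi x). solve_minmax.
Qed.

Lemma mm_level_ge_lower psi s c c' d : mm_level_ge nu psi s c -> c' <= c -> 0 < d ->
  mm_level_ge nu psi (s - d) c'.
Proof.
  intros H h1 h2 K hK.
  set (K2 := (c - c' + 1) / d).
  assert (hK2 : K2 * d = c - c' + 1) by (unfold K2; field; lra).
  assert (hK20 : 0 <= K2) by (unfold K2; apply Rlt_le, Rdiv_lt_0_compat; lra).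
  specialize (H K2 hK20).
  apply (maxmin_transfer nu (ramp psi s c K2) (ramp psi (s - d) c' K) c' (c' - 1)); [auto|lra| |lra].
  intros x; simpl. set (y := proj1_sig psi x). solve_minmax.
Qed.

End ToMaxPlus.

Section Inverse.
Context {X : CompHaus}.
Implicit Types (phi psi : Cfun X).

Section MaxPlus.
Variable mu : Cfun X -> R.
Hypothesis mu_maxplus : is_maxplus X mu.
Let mu_maxitive := maxplus_maxitive mu mu_maxplus.

Lemma maxplus_truncate psi t e K : 0 <= K -> (forall x, proj1_sig psi x <= t + e) ->
  t + e + mu (ramp psi t 0 K) < mu psi ->
  mu psi <= mu (postcomp psi (fun y => Rmin y t) ltac:(solve_lipschitz)).
Proof.
  intros hK hpsi Hn.
  set (low := postcomp psi (fun y => Rmin y t) ltac:(solve_lipschitz)).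
  set (high := postcomp psi (fun y => t + e + K * Rmin (y - t) 0) ltac:(solve_lipschitz)).
  set (both := postcomp psi (fun y => Rmax (Rmin y t) (t + e + K * Rmin (y - t) 0))
                  ltac:(solve_lipschitz)).
  assert (E : mu both = Rmax (mu low) (mu high)) by (apply (proj2 mu_maxitive); reflexivity).
  assert (h1 : mu psi <= mu both).
  { apply (maxitive_mono mu mu_maxitive). intros x. simpl. specialize (hpsi x). solve_minmax. }
  assert (h2 : mu high <= mu (ramp psi t 0 K) + (t + e)).
  { apply (maxplus_le_shift mu _ _ _ mu_maxplus). intros x; simpl. lra. }
  rewrite E in h1. solve_minmax.
Qed.

(* Induction on the number of [e]-slabs of [psi] above [a]: either the top slab [{psi >= t}]
   carries [mu psi] up to [e], or [psi] can be truncated at [t] by [maxplus_truncate]. *)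
Lemma maxplus_level_approx_step a e N psi : 0 < e ->
  (forall x, proj1_sig psi x <= a + INR N * e) ->
  mu psi <= a \/ exists s b, mp_level_ge mu psi s b /\ mu psi <= s + b + e.
Proof.
  intros he. revert psi. induction N as [|N IH]; intros psi hpsi.
  - left. apply (maxitive_le_const mu mu_maxitive). intros x; specialize (hpsi x); simpl in hpsi; lra.
  - rewrite S_INR in hpsi. set (t := a + INR N * e).
    destruct (classic (forall K, 0 <= K -> mu psi <= t + e + mu (ramp psi t 0 K))) as [Hy|Hn].
    + right. exists t, (mu psi - t - e). split; [|lra].
      intros K hK. specialize (Hy K hK). lra.
    + apply not_all_ex_not in Hn as [K Hn]. apply imply_to_and in Hn as [hK Hn].
      apply Rnot_le_lt in Hn.
      pose proof (maxplus_truncate psi t e K hK ltac:(unfold t; intros x; specialize (hpsi x); lra) Hn)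
        as htr.
      destruct (IH (postcomp psi (fun y => Rmin y t) ltac:(solve_lipschitz)))
        as [hl|[s [b [hA hb]]]].
      * intros x; simpl. apply Rmin_r.
      * left; lra.
      * right. exists s, b. split; [|lra].
        eapply (mp_level_ge_mono_fun mu mu_maxitive); [|exact hA].
        intros x; simpl. apply Rmin_l.
Qed.

Lemma maxplus_level_approx psi e : 0 < e ->
  exists s b, mp_level_ge mu psi s b /\ mu psi <= s + b + e.
Proof.
  intros he. destruct (Cfun_bounded psi) as [M hM].
  set (a := mu psi - 1).
  destruct (INR_unbounded ((M - a) / e)) as [N hN].
  assert (INR N * e >= M - a).
  { apply Rmult_gt_compat_r with (r := e) in hN; [|lra].
    replace ((M - a) / e * e) with (M - a) in hN by (field; lra). lra. }
  destruct (maxplus_level_approx_step a e N psi he) as [h|h]; auto.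
  - intros x; specialize (hM x); lra.
  - unfold a in h; lra.
Qed.

Lemma mm_level_ge_to_maxmin psi s c :
  mm_level_ge (to_maxmin mu) psi s c <-> mp_level_ge mu psi s (tr c).
Proof.
  assert (E : forall K K', 0 <= K ->
            mu (ramp (ramp psi s c K) c 0 K') = mu (ramp psi s 0 (K' * K))).
  { intros K K' hK. apply (maxitive_ext mu mu_maxitive). intros x; simpl. solve_minmax. }
  split.
  - intros H K' hK'. specialize (H 1 ltac:(lra)). apply to_maxmin_set_iff in H; auto.
    specialize (H K' hK'). rewrite E, Rmult_1_r in H by lra. exact H.
  - intros H K hK. apply to_maxmin_set_iff; auto. intros K' hK'. rewrite E by lra. apply H. nra.
Qed.

Lemma to_maxplus_to_maxmin psi : to_maxplus (to_maxmin mu) psi = mu psi.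
Proof.
  apply sup_eq. split.
  - intros u [s [c [hB ->]]]. apply mm_level_ge_to_maxmin in hB. exact (mp_level_ge_le mu mu_maxplus psi s (tr c) hB).
  - intros m hmb. apply Rle_plus_epsilon. intros e he.
    destruct (maxplus_level_approx psi (e / 2) ltac:(lra)) as [s [b [hA hb]]].
    pose proof (mp_level_ge_nonpos mu mu_maxplus psi s b hA).
    assert (htr : tr (tr_inv (b - e / 2)) = b - e / 2) by (apply tr_tr_inv; lra).
    assert (s + tr (tr_inv (b - e / 2)) <= m); [|lra].
    apply hmb. exists s, (tr_inv (b - e / 2)). split; auto.
    apply mm_level_ge_to_maxmin. rewrite htr.
    apply (mp_level_ge_antitone mu mu_maxitive psi s s b); auto; lra.
Qed.

End MaxPlus.

Section MaxMin.
Variable nu : Cfun X -> R.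
Hypothesis nu_maxmin : is_maxmin X nu.
Let nu_maxitive := maxmin_maxitive nu nu_maxmin.

Lemma to_maxmin_set_to_maxplus_of_le phi r : r <= nu phi -> to_maxmin_set (to_maxplus nu) phi r.
Proof.
  intros hr K [hK|<-].
  - apply Rle_plus_epsilon. intros e he.
    assert (hB : mm_level_ge nu phi (r + (- e) / K) r).
    { apply mm_level_ge_of_le; auto.
      assert (0 < e / K) by (apply Rdiv_lt_0_compat; lra).
      replace (r + - e / K) with (r - e / K) by (field; lra). lra. }
    apply mm_level_ge_ramp in hB; auto; try lra.
    pose proof (to_maxplus_ge nu nu_maxitive _ _ _ hB). lra.
  - rewrite (maxitive_ramp0 _ (maxplus_maxitive _ (to_maxplus_maxplus nu nu_maxitive))).
    pose proof (tr_neg r). lra.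
Qed.

Lemma to_maxplus_ramp_le phi r K : nu phi < r -> 1 <= K -> K * (nu phi - r) <= tr (nu phi) ->
  to_maxplus nu (ramp phi r 0 K) <= tr (nu phi).
Proof.
  intros hr hK1 hK2. set (u := nu phi) in *.
  apply (proj2 (to_maxplus_lub nu nu_maxitive _)). intros v [s [c [hB ->]]].
  pose proof (mm_level_ge_ramp_nonpos nu nu_maxitive phi r K s c ltac:(lra) hB) as hs.
  apply mm_level_ge_ramp in hB; auto; try lra.
  apply mm_level_ge_le in hB; auto. pose proof (tr_neg c).
  destruct (Rle_or_lt c u) as [hcu|hcu].
  - pose proof (tr_le c u hcu). lra.
  - assert (r + s / K <= u) by (fold u in hB; unfold Rmin in hB; destruct Rle_dec; lra).
    assert (s <= K * (u - r)) by (assert (s / K * K = s) by (field; lra); nra).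
    lra.
Qed.

Lemma to_maxmin_set_to_maxplus_le phi r : to_maxmin_set (to_maxplus nu) phi r -> r <= nu phi.
Proof.
  intros H. destruct (Rle_or_lt r (nu phi)) as [|hr]; auto. exfalso.
  pose proof (tr_lt _ _ hr).
  set (K := Rmax 1 (tr (nu phi) / (nu phi - r))).
  assert (hK1 : 1 <= K) by apply Rmax_l.
  assert (hK2 : K * (nu phi - r) <= tr (nu phi)).
  { assert (tr (nu phi) / (nu phi - r) <= K) by apply Rmax_r.
    assert (tr (nu phi) / (nu phi - r) * (nu phi - r) = tr (nu phi)) by (field; lra). nra. }
  specialize (H K ltac:(lra)). pose proof (to_maxplus_ramp_le phi r K hr hK1 hK2). lra.
Qed.

Lemma to_maxmin_to_maxplus phi : to_maxmin (to_maxplus nu) phi = nu phi.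
Proof.
  apply to_maxmin_eq. intros r. split.
  - apply to_maxmin_set_to_maxplus_le.
  - apply to_maxmin_set_to_maxplus_of_le.
Qed.

End MaxMin.
End Inverse.

Definition satisfies_tests {T : Type} (m : T -> R) (l : list (T * (R -> Prop))) : Prop :=
  Forall (fun p => snd p (m (fst p))) l.

Definition open_tests {T : Type} (l : list (T * (R -> Prop))) : Prop :=
  Forall (fun p => R_open (snd p)) l.

Lemma pointwise_continuous {T : Type} (PA PB : (T -> R) -> Prop) (F : {m | PA m} -> {n | PB n}) :
  (forall m (phi : T) (U : R -> Prop), R_open U -> U (proj1_sig (F m) phi) ->
     exists l, open_tests l /\ satisfies_tests (proj1_sig m) l /\
       forall m', satisfies_tests (proj1_sig m') l -> U (proj1_sig (F m') phi)) ->
  continuous (pointwise_open PA) (pointwise_open PB) F.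
Proof.
  intros H W hW m hm. destruct (hW _ hm) as [l [h1 [h2 h3]]].
  enough (Hl : exists l', open_tests l' /\ satisfies_tests (proj1_sig m) l' /\
            forall m', satisfies_tests (proj1_sig m') l' -> satisfies_tests (proj1_sig (F m')) l)
    by (destruct Hl as [l' [g1 [g2 g3]]];
        exists l'; split; [exact g1 | split; [exact g2 | intros n hn; apply h3, g3, hn]]).
  clear h3. induction l as [|[phi U] l IH].
  - exists []. repeat split; constructor.
  - inversion h1 as [|? ? hU1 h1']; inversion h2 as [|? ? hU2 h2']; subst.
    destruct (IH h1' h2') as [l1 [a1 [a2 a3]]].
    destruct (H m phi U hU1 hU2) as [l2 [b1 [b2 b3]]].
    exists (l2 ++ l1). unfold open_tests, satisfies_tests in *. repeat split.
    + apply Forall_app; auto.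
    + apply Forall_app; auto.
    + intros m' hm'. apply Forall_app in hm' as [? ?]. constructor; simpl; auto.
Qed.

Lemma R_open_lt a : R_open (fun y => y < a).
Proof. intros x hx. exists (a - x). split; [lra|]. intros y hy. destruct (Rle_abs_both (y - x)). lra. Qed.

Lemma R_open_gt a : R_open (fun y => a < y).
Proof. intros x hx. exists (x - a). split; [lra|]. intros y hy. destruct (Rle_abs_both (y - x)). lra. Qed.

Lemma ball_sub (U : R -> Prop) v y e : (forall z, Rabs (z - v) < e -> U z) ->
  v - e < y < v + e -> U y.
Proof. intros H h. apply H, Rabs_def1; lra. Qed.

Definition kI (X : CompHaus) (mu : IX X) : JX X :=
  exist _ (to_maxmin (proj1_sig mu)) (to_maxmin_maxmin _ (proj2_sig mu)).

Definition kJ (X : CompHaus) (nu : JX X) : IX X :=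
  exist _ (to_maxplus (proj1_sig nu))
    (to_maxplus_maxplus _ (maxmin_maxitive _ (proj2_sig nu))).

Section Continuity.
Context {X : CompHaus}.
Implicit Types (phi psi : Cfun X).

Lemma to_maxmin_le_of_test mu phi r K : is_maxplus X mu -> 0 <= K ->
  mu (ramp phi r 0 K) < tr r -> to_maxmin mu phi <= r.
Proof.
  intros hm hK H. destruct (Rle_or_lt (to_maxmin mu phi) r) as [|h]; auto. exfalso.
  assert (hr : to_maxmin_set mu phi r) by (apply to_maxmin_set_iff; auto; lra).
  specialize (hr K hK). lra.
Qed.

Lemma to_maxmin_ge_of_test mu phi r r' K : is_maxplus X mu -> r' < r ->
  K * (r - r') = 1 - tr r' -> tr r' < mu (ramp phi r 0 K) -> r' <= to_maxmin mu phi.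
Proof.
  intros hm hr hK H. pose proof (tr_neg r').
  assert (0 < K) by (destruct (Rle_or_lt K 0); nra).
  apply to_maxmin_set_iff; auto. intros K' hK'.
  assert (mu (ramp phi r 0 K) <= Rmax (mu (ramp phi r' 0 K')) (- (K * (r - r')))); [|solve_minmax].
  apply (maxitive_le_Rmax_const mu (maxplus_maxitive mu hm)).
  intros x; simpl. solve_minmax.
Qed.

Lemma to_maxplus_ge_of_test nu psi s c d K : is_maxmin X nu -> 0 < d -> K * d = d + 1 ->
  c - d / 2 < nu (ramp psi s c K) -> s - d + tr (c - d) <= to_maxplus nu psi.
Proof.
  intros hn hd hK H. apply (to_maxplus_ge nu (maxmin_maxitive nu hn)). intros K' hK'.
  apply (maxmin_transfer nu (ramp psi s c K) _ (c - d) (c - d - 1)); [auto|lra| |lra].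
  intros x; simpl. set (y := proj1_sig psi x). solve_minmax.
Qed.

(* By induction on [N]: finitely many tests force [t + tr c <= v + e/2] for every level pair
   [(t, c)] of [nu'] with [t] below [v + e/2 + N e/8]; tests exist since each [(t, c)] with
   [t + tr c > v + e/2] fails for [nu] itself. *)
Lemma to_maxplus_upper_tests nu psi v e : is_maxmin X nu -> to_maxplus nu psi = v -> 0 < e ->
  forall N, exists l, open_tests l /\ satisfies_tests nu l /\
    forall nu', is_maxmin X nu' -> satisfies_tests nu' l -> forall t c, mm_level_ge nu' psi t c ->
      t < v + e / 2 + INR N * (e / 8) -> t + tr c <= v + e / 2.
Proof.
  intros hn hv he. induction N as [|N IH].
  - exists []. split; [constructor|split; [constructor|]].
    intros nu' _ _ t c _ ht. simpl in ht. pose proof (tr_neg c). lra.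
  - destruct IH as [l [o1 [s1 h1]]].
    set (s := v + e / 2 + INR N * (e / 8)).
    pose proof (pos_INR N).
    assert (hs : v + e / 2 <= s) by (unfold s; nra).
    set (cs := tr_inv (v - s + e / 4)).
    assert (hcs : tr cs = v - s + e / 4) by (apply tr_tr_inv; lra).
    assert (nB : ~ mm_level_ge nu psi (s - e / 8) cs).
    { intros hB. pose proof (to_maxplus_ge nu (maxmin_maxitive nu hn) psi _ _ hB). lra. }
    apply not_all_ex_not in nB as [Ki nB]. apply imply_to_and in nB as [hKi nB].
    apply Rnot_le_lt in nB.
    exists ((ramp psi (s - e / 8) cs Ki, fun y => y < cs) :: l). split; [|split].
    + constructor; auto. apply R_open_lt.
    + constructor; auto.
    + intros nu' hn' hs' t c hB ht. apply Forall_cons_iff in hs' as [t1 t3]. simpl in t1.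
      destruct (Rlt_or_le t s) as [hts|hts]; [apply (h1 nu' hn' t3 t c hB hts)|].
      rewrite S_INR in ht. fold s in ht.
      destruct (Rle_or_lt c cs) as [hc|hc].
      * pose proof (tr_le c cs hc). unfold s in *. nra.
      * exfalso.
        assert (hB' : mm_level_ge nu' psi s c)
          by (apply (mm_level_ge_antitone nu' (maxmin_maxitive nu' hn') psi t); auto).
        apply (mm_level_ge_lower nu' hn' psi s c cs (e / 8)) in hB'; try lra.
        specialize (hB' Ki hKi). lra.
Qed.

End Continuity.

Lemma kI_continuous X : continuous (I_open X) (J_open X) (kI X).
Proof.
  apply pointwise_continuous. intros [mu hm] phi U hU hv. simpl in *.
  set (v := to_maxmin mu phi) in *. destruct (hU v hv) as [e [he He]].
  set (r1 := v + e / 2). set (r2 := v - e / 4). set (r3 := v - e / 2).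
  assert (n1 : ~ to_maxmin_set mu phi r1)
    by (rewrite to_maxmin_set_iff by auto; fold v; unfold r1; lra).
  apply not_all_ex_not in n1 as [K1 n1]. apply imply_to_and in n1 as [hK1 n1].
  apply Rnot_le_lt in n1.
  pose proof (tr_neg r3). pose proof (tr_lt r3 r2 ltac:(unfold r2, r3; lra)).
  set (K0 := (1 - tr r3) / (r2 - r3)).
  assert (hK0 : K0 * (r2 - r3) = 1 - tr r3) by (unfold K0, r2, r3; field; lra).
  assert (hK00 : 0 <= K0) by (unfold K0; apply Rlt_le, Rdiv_lt_0_compat; [lra | unfold r2, r3; lra]).
  assert (p2 : to_maxmin_set mu phi r2) by (apply to_maxmin_set_iff; auto; fold v; unfold r2; lra).
  exists [(ramp phi r1 0 K1, fun y => y < tr r1); (ramp phi r2 0 K0, fun y => tr r3 < y)].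
  split; [|split].
  - repeat constructor; [apply R_open_lt | apply R_open_gt].
  - repeat constructor; simpl; auto. specialize (p2 K0 hK00). lra.
  - intros [mu' hm'] hs. simpl.
    apply Forall_cons_iff in hs as [t1 hs]. apply Forall_cons_iff in hs as [t2 _]. simpl in t1, t2.
    pose proof (to_maxmin_le_of_test mu' phi r1 K1 hm' hK1 t1).
    pose proof (to_maxmin_ge_of_test mu' phi r2 r3 K0 hm' ltac:(unfold r2, r3; lra) hK0 t2).
    apply (ball_sub U v _ e He). unfold r1, r3 in *. lra.
Qed.

Lemma kJ_continuous X : continuous (J_open X) (I_open X) (kJ X).
Proof.
  apply pointwise_continuous. intros [nu hn] psi U hU hv. simpl in *.
  pose proof (maxmin_maxitive nu hn) as hc.
  set (v := to_maxplus nu psi) in *. destruct (hU v hv) as [e [he He]].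
  destruct (is_lub_approx _ _ (v - e / 2) (to_maxplus_lub nu hc psi) ltac:(unfold v; lra))
    as [u [[s [c [hB ->]]] hu]].
  set (K0 := (e / 8 + 1) / (e / 8)).
  assert (hK0 : K0 * (e / 8) = e / 8 + 1) by (unfold K0; field; lra).
  assert (hK00 : 0 <= K0) by (unfold K0; apply Rlt_le, Rdiv_lt_0_compat; lra).
  destruct (Cfun_bounded psi) as [M hM].
  destruct (INR_unbounded ((M - v) / (e / 8))) as [N hN].
  assert (hNe : INR N * (e / 8) > M - v).
  { apply Rmult_gt_compat_r with (r := e / 8) in hN; [|lra].
    replace ((M - v) / (e / 8) * (e / 8)) with (M - v) in hN by (field; lra). lra. }
  destruct (to_maxplus_upper_tests nu psi v e hn eq_refl he N) as [l [o1 [s1 h1]]].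
  exists ((ramp psi s c K0, fun y => c - e / 16 < y) :: l). split; [|split].
  - constructor; auto. apply R_open_gt.
  - constructor; auto. simpl. specialize (hB K0 hK00). lra.
  - intros [nu' hn'] hs'. simpl. apply Forall_cons_iff in hs' as [t1 t3]. simpl in t1.
    pose proof (to_maxplus_ge_of_test nu' psi s c (e / 8) K0 hn' ltac:(lra) hK0 ltac:(lra)).
    pose proof (tr_sub_bounds (c - e / 8) c ltac:(lra)).
    assert (up : to_maxplus nu' psi <= v + e / 2).
    { apply (proj2 (to_maxplus_lub nu' (maxmin_maxitive nu' hn') psi)).
      intros w [t [c' [hB' ->]]]. apply (h1 nu' hn' t3 t c' hB').
      assert (t <= M); [|lra].
      apply (mm_level_ge_le_bound nu' (maxmin_maxitive nu' hn') psi t c' M); auto.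
      intros x; apply hM. }
    apply (ball_sub U v _ e He). lra.
Qed.

Lemma ramp_precomp (X Y : CompHaus) (f : cmap X Y) (psi : Cfun Y) s c K :
  precomp f (ramp psi s c K) = ramp (precomp f psi) s c K.
Proof. apply subset_eq_compat. reflexivity. Qed.

Lemma kI_natural (X Y : CompHaus) (f : cmap X Y) (mu : IX X) :
  Jmap f (kI X mu) = kI Y (Imap f mu).
Proof.
  apply (eq_sig_hprop (fun _ => proof_irrelevance _)). simpl. extensionality psi.
  unfold to_maxmin, to_maxmin_set, mp_level_ge. f_equal. extensionality r.
  apply propositional_extensionality. setoid_rewrite ramp_precomp. reflexivity.
Qed.

Theorem mainTheorem13 :
  exists k : forall X : CompHaus, IX X -> JX X,
    (forall X : CompHaus, is_homeomorphism (I_open X) (J_open X) (k X)) /\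
    (forall (X Y : CompHaus) (f : cmap X Y) (mu : IX X),
       Jmap f (k X mu) = k Y (Imap f mu)).
Proof.
  exists kI. split; [|exact kI_natural].
  intros X. exists (kJ X). split; [|split; [|split]].
  - intros [mu hm]. apply (eq_sig_hprop (fun _ => proof_irrelevance _)). simpl.
    extensionality psi. apply to_maxplus_to_maxmin; auto.
  - intros [nu hn]. apply (eq_sig_hprop (fun _ => proof_irrelevance _)). simpl.
    extensionality phi. apply to_maxmin_to_maxplus; auto.
  - apply kI_continuous.
  - apply kJ_continuous.
Qed.
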